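(* Let $l<h$ be constants and $n$ a positive integer, and let $\phi_0,\phi_1,\phi_2,\ldots$ be univariate polynomials (a polynomial basis), with $\phi_i$ used for index $i$. Suppose there is a function $\xi(m)$ such that for every $m$, every $a_0,\ldots,a_m\in\mathbb{R}^d$ and the univariate polynomial $g(t)=\sum_{i=0}^m a_i\phi_i(t)$, $$\|a_i\|\le \xi(m)\max_{l\le t\le h}\|g(t)\|\quad (i=0,\ldots,m).$$ Suppose also there is a function $\zeta(m_1,\ldots,m_n)$ such that for all $\bar a_{i_1,\ldots,i_n}\in\mathbb{R}^d$ ($i_j=0,\ldots,m_j$) and $\bar g(x_1,\ldots,x_n)=\sum_{i_1=0}^{m_1}\cdots\sum_{i_n=0}^{m_n}\bar a_{i_1,\ldots,i_n}\phi_{i_1}(x_1)\cdots\phi_{i_n}(x_n)$, $$\|\bar a_{i_1,\ldots,i_n}\|\le \zeta(m_1,\ldots,m_n)\max_{l\le x_1,\ldots,x_n\le h}\|\bar g(x_1,\ldots,x_n)\|.$$ Then for all $b_{i_1,\ldots,i_{n+1}}\in\mathbb{R}^d$ ($i_j=0,\ldots,m_j$) and $f(x_1,\ldots,x_{n+1})=\sum_{i_1=0}^{m_1}\cdots\sum_{i_{n+1}=0}^{m_{n+1}} b_{i_1,\ldots,i_{n+1}}\phi_{i_1}(x_1)\cdots\phi_{i_{n+1}}(x_{n+1})$, $$\|b_{i_1,\ldots,i_{n+1}}\|\le \zeta(m_1,\ldots,m_n)\,\xi(m_{n+1})\max_{l\le x_1,\ldots,x_{n+1}\le h}\|f(x_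1,\ldots,x_{n+1})\|.$$
   Context: $\|\cdot\|$ denotes a fixed vector norm on $\mathbb{R}^d$ (the paper works with the infinity norm). *)

From HB Require Import structures.
From mathcomp Require Import all_boot all_order all_algebra.
From mathcomp Require Import all_classical all_reals.
Set Implicit Arguments. Unset Strict Implicit. Unset Printing Implicit Defensive.
Import Order.TTheory GRing.Theory Num.Theory.
Local Open Scope ring_scope.
Local Open Scope classical_set_scope.

Definition is_vnorm (R : realType) (d : nat) (N : 'rV[R]_d -> R) : Prop :=
  (forall x y, N (x + y) <= N x + N y) /\
  (forall (c : R) x, N (c *: x) = `|c| * N x) /\
  (forall x, N x = 0 -> x = 0).

Definition uni_eval (R : realType) (d : nat) (phi : nat -> {poly R}) (m : nat)
  (a : nat -> 'rV[R]_d) (t : R) : 'rV[R]_d :=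
  \sum_(i < m.+1) (phi i).[t] *: a i.

(* max_{l <= t <= h} N(g(t)), written as the supremum of the (attained) values. *)
Definition uni_max (R : realType) (d : nat) (N : 'rV[R]_d -> R) (l h : R)
  (g : R -> 'rV[R]_d) : R :=
  sup [set N (g t) | t in [set t : R | l <= t <= h]].

(* Multi-indices (i_1..i_n) with 0 <= i_j <= m_j, encoded as finite functions
   with values below max_j m_j + 1 and filtered by i_j <= m_j. *)
Definition mbound (n : nat) (m : 'I_n -> nat) : nat := (\max_(j < n) m j).+1.

Definition multi_eval (R : realType) (d n : nat) (phi : nat -> {poly R})
  (m : 'I_n -> nat) (a : ('I_n -> nat) -> 'rV[R]_d) (x : 'I_n -> R) : 'rV[R]_d :=
  \sum_(i : {ffun 'I_n -> 'I_(mbound m)} | [forall j, (i j <= m j)%N])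
     (\prod_(j < n) (phi (i j)).[x j]) *: a (fun j => nat_of_ord (i j)).

Definition multi_max (R : realType) (d n : nat) (N : 'rV[R]_d -> R) (l h : R)
  (g : ('I_n -> R) -> 'rV[R]_d) : R :=
  sup [set N (g x) | x in [set x : 'I_n -> R | forall j, l <= x j <= h]].

From HB Require Import structures.
From mathcomp Require Import all_boot all_order all_algebra.
From mathcomp Require Import all_classical all_reals.
From mathcomp Require Import lra.
Import Order.TTheory GRing.Theory Num.Theory.
Local Open Scope ring_scope.

(* Fix the first n variables at x' and expand f along the last one: each
   coefficient of that univariate expansion is an n-variate expansion with
   coefficients b(i', k).  The univariate bound xi controls these coefficients
   by the max over the last variable, and the n-variate bound zeta controls
   b(i', k) by the max over the remaining variables; chaining the two maxima
   gives the max of f over the whole box. *)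

Section SupImage.
Context {R : realType} {T : Type} (A : set T) (F : T -> R).

Lemma sup_image_ub x : (exists C, forall y, A y -> F y <= C) ->
  A x -> F x <= sup [set F y | y in A].
Proof.
move=> [C hC] Ax; apply: sup_upper_bound; last by exists x.
split; first by exists (F x), x.
by exists C => _ [y Ay <-]; exact: hC.
Qed.

Lemma sup_image_le C : (exists x, A x) -> (forall y, A y -> F y <= C) ->
  sup [set F y | y in A] <= C.
Proof.
move=> [x Ax] hC; apply: ge_sup; first by exists (F x), x.
by move=> _ [y Ay <-]; exact: hC.
Qed.

End SupImage.

Definition horner_bound {R : numDomainType} (p : {poly R}) (r : R) : R :=
  \sum_(i < size p) `|p`_i| * r ^+ i.

Lemma normr_horner_le (R : realDomainType) (p : {poly R}) (r t : R) :
  `|t| <= r -> `|p.[t]| <= horner_bound p r.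
Proof.
move=> tr; rewrite horner_coef; apply: le_trans (ler_norm_sum _ _ _) _.
apply: ler_sum => i _; rewrite normrM normrX; apply: ler_wpM2l => //.
have r0 : 0 <= r := le_trans (normr_ge0 t) tr.
by apply: lerXn2r; rewrite // qualifE /=.
Qed.

Lemma normr_itv_le (R : realDomainType) (l h t : R) :
  l <= t <= h -> `|t| <= `|l| + `|h|.
Proof.
move=> /andP[lt th]; have := ler_norm h; have := ler_norm (- l).
rewrite normrN; have := normr_ge0 l; have := normr_ge0 h.
by case: (lerP 0 t) => [/ger0_norm|/ltr0_norm] ->; lra.
Qed.

Lemma ge0_ler_pM (R : realDomainType) (x c M : R) :
  0 < x -> 0 <= M -> x <= c * M -> 0 <= c.
Proof. by move=> x0 M0 xcM; rewrite leNgt; apply/negP => c0; nra. Qed.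

Section NormedExpansions.
Context {R : realType} {d : nat} (N : 'rV[R]_d -> R).
Hypothesis normN : is_vnorm N.

Let normND x y : N (x + y) <= N x + N y. Proof. by case: normN. Qed.
Let normNZ c x : N (c *: x) = `|c| * N x. Proof. by case: normN => _ []. Qed.

Lemma vnorm0 : N 0 = 0.
Proof. by rewrite -(scale0r (0 : 'rV[R]_d)) normNZ normr0 mul0r. Qed.

Lemma vnorm_ge0 x : 0 <= N x.
Proof.
have := normND x (- x).
by rewrite subrr vnorm0 -scaleN1r normNZ normrN normr1 mul1r; lra.
Qed.

Lemma vnorm_sum {I : Type} (r : seq I) (P : pred I) (F : I -> 'rV[R]_d) :
  N (\sum_(i <- r | P i) F i) <= \sum_(i <- r | P i) N (F i).
Proof.
apply: (big_ind2 (fun a b => N b <= a)) => //; first by rewrite vnorm0.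
by move=> x1 x2 y1 y2 h1 h2; apply: le_trans (normND _ _) _; exact: lerD.
Qed.

Variables (l h : R) (phi : nat -> {poly R}).

Lemma multi_eval_bounded n (m : 'I_n -> nat) a : exists C, forall x,
  (forall j, l <= x j <= h) -> N (multi_eval phi m a x) <= C.
Proof.
exists (\sum_(i : {ffun 'I_n -> 'I_(mbound m)} | [forall j, (i j <= m j)%N])
  (\prod_(j < n) horner_bound (phi (i j)) (`|l| + `|h|)) *
    N (a (fun j => nat_of_ord (i j)))).
move=> x hx; apply: le_trans (vnorm_sum _ _ _) _; apply: ler_sum => i _.
rewrite normNZ; apply: ler_wpM2r; first exact: vnorm_ge0.
rewrite normr_prod; apply: ler_prod => j _; rewrite normr_ge0.
exact/normr_horner_le/normr_itv_le.
Qed.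

Lemma uni_eval_bounded (m : nat) a : exists C, forall t,
  l <= t <= h -> N (uni_eval phi m a t) <= C.
Proof.
exists (\sum_(i < m.+1) horner_bound (phi i) (`|l| + `|h|) * N (a i)).
move=> t ht; apply: le_trans (vnorm_sum _ _ _) _; apply: ler_sum => i _.
rewrite normNZ; apply: ler_wpM2r; first exact: vnorm_ge0.
exact/normr_horner_le/normr_itv_le.
Qed.

Lemma multi_max_ub n (m : 'I_n -> nat) a x : (forall j, l <= x j <= h) ->
  N (multi_eval phi m a x) <= multi_max N l h (multi_eval phi m a).
Proof. by apply: sup_image_ub; exact: multi_eval_bounded. Qed.

Hypothesis lh : l <= h.

Lemma multi_max_le n (f : ('I_n -> R) -> 'rV[R]_d) C :
  (forall x, (forall j, l <= x j <= h) -> N (f x) <= C) ->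
  multi_max N l h f <= C.
Proof. by apply: sup_image_le; exists (fun=> l) => j; rewrite lexx. Qed.

Lemma uni_max_le (f : R -> 'rV[R]_d) C :
  (forall t, l <= t <= h -> N (f t) <= C) -> uni_max N l h f <= C.
Proof. by apply: sup_image_le; exists l; rewrite /= lexx. Qed.

Lemma multi_max_ge0 n (m : 'I_n -> nat) a :
  0 <= multi_max N l h (multi_eval phi m a).
Proof.
apply: le_trans (vnorm_ge0 (multi_eval phi m a (fun=> l))) _.
by apply: multi_max_ub => j; rewrite lexx.
Qed.

Lemma uni_max_ge0 (m : nat) a : 0 <= uni_max N l h (uni_eval phi m a).
Proof.
apply: le_trans (vnorm_ge0 (uni_eval phi m a l)) _.
by apply: sup_image_ub; [exact: uni_eval_bounded | rewrite /= lexx].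
Qed.

End NormedExpansions.

(* The bound [mbound m] of the index type in [multi_eval] is only a device to
   make the index set finite: any larger bound gives the same sum. *)
Lemma multi_eval_widen {R : realType} {d n : nat} phi (m : 'I_n -> nat)
    (a : ('I_n -> nat) -> 'rV[R]_d) x {B : nat} :
    (mbound m <= B)%N ->
  multi_eval phi m a x =
  \sum_(i : {ffun 'I_n -> 'I_B} | [forall j, (i j <= m j)%N])
     (\prod_(j < n) (phi (i j)).[x j]) *: a (fun j => nat_of_ord (i j)).
Proof.
move=> mB; rewrite /multi_eval.
rewrite (reindex_onto (fun i : {ffun 'I_n -> 'I_(mbound m)} =>
  [ffun j => widen_ord mB (i j)])
  (fun i : {ffun 'I_n -> 'I_B} => [ffun j => inord (i j)])) /=; last first.
  move=> i /forallP im; apply/ffunP => j; rewrite !ffunE; apply: val_inj.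
  rewrite /= inordK // ltnS (leq_trans (im j)) //.
  exact: (@leq_bigmax_cond _ _ (fun j => m j) j).
apply: eq_big => [i|i _]; last first.
  congr (_ *: a _); first by apply: eq_bigr => j _; rewrite ffunE.
  by apply: funext => j; rewrite ffunE.
apply/idP/idP => [/forallP im|/andP[/forallP im _]]; last first.
  by apply/forallP => j; have := im j; rewrite ffunE.
apply/andP; split; first by apply/forallP => j; rewrite ffunE; exact: im.
by apply/eqP/ffunP => j; rewrite !ffunE; apply: val_inj; rewrite /= inordK.
Qed.

Section RconsFun.
Context {n : nat} {T : Type}.

Definition rcons_fun (f : 'I_n -> T) (z : T) (j : 'I_n.+1) : T :=
  if unlift ord_max j is Some j' then f j' else z.

Lemma widen_ord_lift (j : 'I_n) : widen_ord (leqnSn n) j = lift ord_max j.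
Proof. by apply: val_inj; rewrite /= /bump leqNgt ltn_ord. Qed.

Lemma rcons_fun_widen (f : 'I_n -> T) z j :
  rcons_fun f z (widen_ord (leqnSn n) j) = f j.
Proof. by rewrite /rcons_fun widen_ord_lift liftK. Qed.

Lemma rcons_fun_max (f : 'I_n -> T) z : rcons_fun f z ord_max = z.
Proof. by rewrite /rcons_fun unlift_none. Qed.

Lemma rcons_fun_ind (P : 'I_n.+1 -> T -> Prop) (f : 'I_n -> T) z :
    (forall j, P (widen_ord (leqnSn n) j) (f j)) -> P ord_max z ->
  forall j, P j (rcons_fun f z j).
Proof.
move=> Pf Pz j; rewrite /rcons_fun.
by case: unliftP => [j' ->|->]; rewrite -?widen_ord_lift.
Qed.

Lemma rcons_funK (g : 'I_n.+1 -> T) :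
  rcons_fun (fun j => g (widen_ord (leqnSn n) j)) (g ord_max) = g.
Proof.
by apply: funext => j; rewrite /rcons_fun; case: unliftP => [j' ->|->];
  rewrite ?widen_ord_lift.
Qed.

End RconsFun.

Lemma rcons_fun_comp {n : nat} {T U : Type} (g : T -> U) (f : 'I_n -> T) z j :
  rcons_fun (fun i => g (f i)) (g z) j = g (rcons_fun f z j).
Proof. by rewrite /rcons_fun; case: unlift. Qed.

Definition ffun_rcons {n : nat} {T : finType} (p : T * {ffun 'I_n -> T}) :
  {ffun 'I_n.+1 -> T} := [ffun j => rcons_fun p.2 p.1 j].

Lemma ffun_rcons_bij n (T : finType) : bijective (@ffun_rcons n T).
Proof.
exists (fun g : {ffun 'I_n.+1 -> T} =>
  (g ord_max, [ffun j => g (widen_ord (leqnSn n) j)])).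
  move=> [k f]; rewrite /ffun_rcons ffunE rcons_fun_max; congr pair.
  by apply/ffunP => j; rewrite !ffunE rcons_fun_widen.
move=> g; apply/ffunP => j; rewrite ffunE /=.
rewrite -[in RHS](rcons_funK g); congr rcons_fun.
by apply: funext => i; rewrite ffunE.
Qed.

Lemma multi_eval_rcons {R : realType} {d n : nat} phi (m : 'I_n.+1 -> nat)
    (b : ('I_n.+1 -> nat) -> 'rV[R]_d) (x' : 'I_n -> R) t :
  uni_eval phi (m ord_max)
    (fun k => multi_eval phi (fun j => m (widen_ord (leqnSn n) j))
                (fun i' => b (rcons_fun i' k)) x') t
  = multi_eval phi m b (rcons_fun x' t).
Proof.
set m' := fun j => m (widen_ord (leqnSn n) j).
have m'B : (mbound m' <= mbound m)%N.
  by rewrite /mbound ltnS big_ord_recr leq_maxl.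
have mnB : ((m ord_max).+1 <= mbound m)%N.
  by rewrite /mbound ltnS big_ord_recr leq_maxr.
rewrite /uni_eval.
under eq_bigr do rewrite (multi_eval_widen _ _ _ _ m'B) scaler_sumr.
rewrite (big_ord_widen _ (fun k => \sum_(i : {ffun 'I_n -> 'I_(mbound m)} |
  [forall j, (i j <= m' j)%N]) (phi k).[t] *:
  (\prod_(j < n) (phi (i j)).[x' j] *:
    b (rcons_fun (fun j => nat_of_ord (i j)) k))) mnB).
rewrite pair_big /= /multi_eval (reindex ffun_rcons) /=; last first.
  exact/onW_bij/ffun_rcons_bij.
apply: eq_big => [[k f]|[k f] _] /=.
  apply/andP/forallP => [[km /forallP fm'] j|im].
    by rewrite ffunE; apply: (rcons_fun_ind (fun j (u : 'I__) => u <= m j)%N).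
  split; first by have := im ord_max; rewrite ffunE rcons_fun_max.
  apply/forallP => j; have := im (widen_ord (leqnSn n) j).
  by rewrite ffunE rcons_fun_widen.
rewrite scalerA big_ord_recr /= ffunE !rcons_fun_max mulrC.
congr (_ * _ *: b _).
  by apply: eq_bigr => j _; rewrite ffunE !rcons_fun_widen.
by apply: funext => j; rewrite ffunE rcons_fun_comp.
Qed.

Lemma uni_max_slice_le {R : realType} {d n : nat} (N : 'rV[R]_d -> R)
    (l h : R) phi (m : 'I_n.+1 -> nat) (b : ('I_n.+1 -> nat) -> 'rV[R]_d)
    (x' : 'I_n -> R) :
    is_vnorm N -> l <= h -> (forall j, l <= x' j <= h) ->
  uni_max N l h (uni_eval phi (m ord_max)
    (fun k => multi_eval phi (fun j => m (widen_ord (leqnSn n) j))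
                (fun i' => b (rcons_fun i' k)) x'))
  <= multi_max N l h (multi_eval phi m b).
Proof.
move=> normN lh x'lh; apply: uni_max_le => // t tlh.
rewrite multi_eval_rcons; apply: multi_max_ub => //.
exact: (rcons_fun_ind (fun _ u => l <= u <= h)).
Qed.

Theorem lemma1 (R : realType) (d n : nat) (N : 'rV[R]_d -> R) (l h : R)
  (phi : nat -> {poly R}) (xi : nat -> R) (zeta : ('I_n -> nat) -> R) :
  is_vnorm N -> l < h -> (0 < n)%N ->
  (forall (m : nat) (a : nat -> 'rV[R]_d) (i : nat), (i <= m)%N ->
     N (a i) <= xi m * uni_max N l h (uni_eval phi m a)) ->
  (forall (m : 'I_n -> nat) (a : ('I_n -> nat) -> 'rV[R]_d) (i : 'I_n -> nat),
     (forall j, (i j <= m j)%N) ->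
     N (a i) <= zeta m * multi_max N l h (multi_eval phi m a)) ->
  forall (m : 'I_n.+1 -> nat) (b : ('I_n.+1 -> nat) -> 'rV[R]_d)
         (i : 'I_n.+1 -> nat),
    (forall j, (i j <= m j)%N) ->
    N (b i) <= zeta (fun j : 'I_n => m (widen_ord (leqnSn n) j)) * xi (m ord_max)
               * multi_max N l h (multi_eval phi m b).
Proof.
move=> normN /ltW lh _ xiP zetaP m b i im.
set m' := fun j => m (widen_ord (leqnSn n) j).
set i' := fun j => i (widen_ord (leqnSn n) j).
have i'm' : forall j, (i' j <= m' j)%N by move=> j; exact: im.
(* Unless N vanishes identically (then both sides are 0), evaluating the
   hypotheses at a constant vector of positive norm shows zeta, xi >= 0. *)
have [[v Nv]|] := pselect (exists v, 0 < N v); last first.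
  move=> /forallNP Nle0; have N0 v : N v = 0.
    by apply/eqP; rewrite eq_le vnorm_ge0 // andbT leNgt; apply/negP.
  have -> : multi_max N l h (multi_eval phi m b) = 0.
    apply/eqP; rewrite eq_le multi_max_ge0 // andbT.
    by rewrite multi_max_le // => x _; rewrite N0.
  by rewrite N0 mulr0.
have zeta0 : 0 <= zeta m'.
  apply: ge0_ler_pM Nv _ (zetaP m' (fun=> v) i' i'm'); exact: multi_max_ge0.
have xi0 : 0 <= xi (m ord_max).
  apply: ge0_ler_pM Nv _ (xiP _ (fun=> v) 0%N (leq0n _)); exact: uni_max_ge0.
have := zetaP m' (fun i' => b (rcons_fun i' (i ord_max))) i' i'm'.
rewrite rcons_funK => /le_trans; apply; rewrite -mulrA ler_wpM2l //.
apply: multi_max_le => // x' x'lh.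
pose slice k := multi_eval phi m' (fun i'' => b (rcons_fun i'' k)) x'.
apply: le_trans (xiP _ slice _ (im ord_max)) _; rewrite ler_wpM2l //.
exact: uni_max_slice_le.
Qed.
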